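(* Let $0<\alpha,\beta<\tfrac12$ and $g\in C_b^1(M)$. The map $h_g$ is well defined on $A$, injective, and $h_g(A)=A_g$, with inverse $h_g^{-1}:A_g\to A$ given by $h_g^{-1}(x,y,z,w)=\big(x,y,z,w-\sum_{i\ge0}\beta^i g(B_\alpha^{-i-1}(x,y))\big)$; moreover $B(v)=h_g^{-1}(B_g(h_g(v)))$ for $v\in A$. Furthermore: (i) if $\alpha>\beta$, $h_g$ is bi-Lipschitz; (ii) if $\alpha=\beta$, $h_g$ and $h_g^{-1}$ are Hölder continuous for every Hölder exponent $\rho<1$; (iii) if $\alpha<\beta$, $h_g$ is Hölder continuous with Hölder exponent $\rho=\frac{\log\beta}{\log\alpha}$.
   Context: $M=[0,1)\times\mathbb R$. $B_\alpha(x,y)=(2x,\alpha y)$ if $0\le x<\tfrac12$ and $(2x-1,\alpha y+1-\alpha)$ if $\tfrac12\le x<1$; likewise $B_\beta$. $C_b^1(M)$: $C^1$ functions on the interior of $M$ with bounded function and derivative, extended continuously to the closure (they are Lipschitz). $B_g(x,y,z,w)=(B_\alpha(x,y),B_\beta(z,w)+(0,g(x,y)))$ on $M\times M$, and $B=B_0$. $A_\alpha\subset[0,1]$ is the Cantor set with $A_\alpha=\alpha A_\alpha\cup(\alpha A_\alpha+1-\alpha)$ (similarly $A_\beta$), $A=[0,1)\times A_\alpha\times[0,1)\times A_\beta$. On $[0,1)\times A_\alpha$, $B_\alpha^{-1}(x,y)=(x/2,y/\alpha)$ if $y\le\tfrac12$ and $((x+1)/2,(y-(1-\alpha))/\alpha)$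 if $y>\tfrac12$. $h_g(x,y,z,w)=\big(x,y,z,w+\sum_{i\ge0}\beta^i g(B_\alpha^{-i-1}(x,y))\big)$. For $\delta>0$ let $V=[0,1)\times[-\delta,1+\delta]\times[0,1)\times[-\delta-\frac{\|g\|_\infty}{1-\beta},1+\delta+\frac{\|g\|_\infty}{1-\beta}]$ (so $B_g(V)\subset V$), and the attractor of $B_g$ is $A_g=\bigcap_{n\in\mathbb N}B_g^n(V)$. Continuity properties refer to the Euclidean metric on $A$ and $A_g$. *)

From Stdlib Require Import Reals.
From Coquelicot Require Import Coquelicot.
Open Scope R_scope.

Definition pt4 := (R * R * R * R)%type.

Definition Bmap (a : R) (p : R * R) : R * R :=
  let '(x, y) := p in
  if Rlt_dec x (1/2) then (2 * x, a * y) else (2 * x - 1, a * y + 1 - a).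

Definition Bg (a b : R) (g : R -> R -> R) (p : pt4) : pt4 :=
  let '(x, y, z, w) := p in
  let '(x', y') := Bmap a (x, y) in
  let '(z', w') := Bmap b (z, w) in
  (x', y', z', w' + g x y).

Definition B0 (a b : R) : pt4 -> pt4 := Bg a b (fun _ _ => 0).

(* The Cantor set A_alpha: the attractor of the IFS {t -> a t, t -> a t + 1 - a},
   i.e. the intersection of the iterates of [0,1]. *)
Fixpoint cantor_approx (a : R) (n : nat) (t : R) : Prop :=
  match n with
  | O => 0 <= t <= 1
  | S n => exists s, cantor_approx a n s /\ (t = a * s \/ t = a * s + 1 - a)
  end.
Definition Cantor (a : R) (t : R) : Prop := forall n, cantor_approx a n t.

Definition Aset (a b : R) (p : pt4) : Prop :=
  let '(x, y, z, w) := p in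
  0 <= x < 1 /\ Cantor a y /\ 0 <= z < 1 /\ Cantor b w.

(* B_alpha^{-1} on [0,1) x A_alpha *)
Definition Binv (a : R) (p : R * R) : R * R :=
  let '(x, y) := p in
  if Rle_dec y (1/2) then (x / 2, y / a) else ((x + 1) / 2, (y - (1 - a)) / a).

Definition hterm (a b : R) (g : R -> R -> R) (x y : R) (i : nat) : R :=
  let q := Nat.iter (S i) (Binv a) (x, y) in b ^ i * g (fst q) (snd q).

Definition hg (a b : R) (g : R -> R -> R) (p : pt4) : pt4 :=
  let '(x, y, z, w) := p in (x, y, z, w + Series (hterm a b g x y)).

Definition hg_inv (a b : R) (g : R -> R -> R) (p : pt4) : pt4 :=
  let '(x, y, z, w) := p in (x, y, z, w - Series (hterm a b g x y)).

Definition bounded_by (g : R -> R -> R) (K : R) : Prop :=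
  forall x y, 0 <= x < 1 -> Rabs (g x y) <= K.

Definition Cb1 (g : R -> R -> R) : Prop :=
  (exists K, bounded_by g K) /\
  (exists gx gy : R -> R -> R,
      (forall x y, 0 < x < 1 ->
         differentiable_pt_lim g x y (gx x y) (gy x y) /\
         continuity_2d_pt gx x y /\ continuity_2d_pt gy x y) /\
      (exists K', forall x y, 0 < x < 1 ->
         sqrt (gx x y ^ 2 + gy x y ^ 2) <= K')) /\
  (forall x y, 0 <= x < 1 -> forall eps, 0 < eps -> exists delta, 0 < delta /\
     forall x' y', 0 <= x' < 1 -> Rabs (x' - x) < delta -> Rabs (y' - y) < delta ->
       Rabs (g x' y' - g x y) < eps).

(* The absorbing region V (depends on delta and a sup-norm bound ||g||_oo). *)
Definition Vset (b delta gnorm : R) (p : pt4) : Prop :=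
  let '(x, y, z, w) := p in
  let c := gnorm / (1 - b) in
  0 <= x < 1 /\ - delta <= y <= 1 + delta /\ 0 <= z < 1 /\
  - delta - c <= w <= 1 + delta + c.

Definition iter_image (f : pt4 -> pt4) (S : pt4 -> Prop) (n : nat) (q : pt4) : Prop :=
  exists p, S p /\ Nat.iter n f p = q.

Definition Ag (a b : R) (g : R -> R -> R) (delta gnorm : R) (q : pt4) : Prop :=
  forall n, iter_image (Bg a b g) (Vset b delta gnorm) n q.

Definition dist4 (p q : pt4) : R :=
  let '(x, y, z, w) := p in
  let '(x', y', z', w') := q in
  sqrt ((x - x') ^ 2 + (y - y') ^ 2 + (z - z') ^ 2 + (w - w') ^ 2).

(* d^rho with the convention 0^rho = 0 (rho > 0) *)
Definition rpow (d rho : R) : R := if Req_EM_T d 0 then 0 else Rpower d rho.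

Definition Holder_on (S : pt4 -> Prop) (f : pt4 -> pt4) (rho : R) : Prop :=
  exists C, 0 <= C /\ forall p q, S p -> S q -> dist4 (f p) (f q) <= C * rpow (dist4 p q) rho.

Definition BiLipschitz_on (S : pt4 -> Prop) (f : pt4 -> pt4) : Prop :=
  exists L, 0 < L /\ forall p q, S p -> S q ->
    dist4 p q / L <= dist4 (f p) (f q) <= L * dist4 p q.

From Stdlib Require Import Reals Lra Lia.
From Coquelicot Require Import Coquelicot.
Open Scope R_scope.

(* On A the branch of B_alpha is read off from y (y <= alpha or y >= 1 - alpha), so the
   series S(x,y) = sum_i beta^i g(B_alpha^{-i-1}(x,y)) converges and satisfies
   S(B_alpha(x,y)) = g(x,y) + beta S(x,y), which says exactly that the vertical shear
   h_g conjugates B to B_g.  As B maps A onto A and h_g(A) lies in V, we get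
   h_g(A) = B_g^n(h_g(A)), contained in B_g^n(V) for every n; conversely, along a B_g-orbit in V the y-coordinate, and then
   w - S(x,y), run through ever finer approximations of the Cantor sets.
   For regularity, two points of A_alpha at distance t follow the same backward branches
   for about ln t / ln alpha steps, during which B_alpha^{-1} stretches y-distances by
   1/alpha, and g is Lipschitz; so the i-th term of S(p) - S(q) is at most
   beta^i min(2|g|, M t alpha^{-i-1}).  The sum of these bounds is O(t) if beta < alpha,
   O(t^rho) for every rho < 1 if beta = alpha, and O(t^(ln beta / ln alpha)) if
   alpha < beta. *)

Lemma pow_le_one x n : 0 <= x <= 1 -> x ^ n <= 1.
Proof.
  intros Hx; induction n as [|n IH]; simpl; [lra|].
  assert (0 <= x ^ n) by (apply pow_le; lra). nra.
Qed.

Lemma exists_pow_small a D e : 0 <= a < 1 -> 0 <= D -> 0 < e -> exists m, D * a ^ m <= e.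
Proof.
  intros Ha HD He.
  destruct (pow_lt_1_zero a ltac:(rewrite Rabs_pos_eq; lra) (e / (D + 1)))
    as [m Hm]; [apply Rdiv_lt_0_compat; lra|].
  exists m. specialize (Hm m (le_n m)). rewrite Rabs_pos_eq in Hm by (apply pow_le; lra).
  apply (Rmult_lt_compat_r (D + 1)) in Hm; [|lra].
  replace (e / (D + 1) * (D + 1)) with e in Hm by (field; lra).
  assert (0 <= a ^ m) by (apply pow_le; lra). nra.
Qed.

Lemma Rle_plus_small_epsilon x y e0 : 0 < e0 ->
  (forall e, 0 < e <= e0 -> x <= y + e) -> x <= y.
Proof.
  intros He0 H. apply Rle_plus_epsilon. intros e He.
  pose proof (Rmin_l e e0). pose proof (Rmin_r e e0).
  assert (0 < Rmin e e0) by (apply Rmin_pos; lra).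
  specialize (H (Rmin e e0) ltac:(lra)). lra.
Qed.

Fixpoint cantor_level (a lo hi : R) (n : nat) (t : R) : Prop :=
  match n with
  | O => lo <= t <= hi
  | S n => exists s, cantor_level a lo hi n s /\ (t = a * s \/ t = a * s + 1 - a)
  end.

(* On [-gap a, 1 + gap a] the images of the two branches of B_alpha lie on either
   side of 1/2, so the branch of a point can be read off its position. *)
Definition gap (a : R) : R := (1 - 2 * a) / (4 * a).

Section CantorSet.
Variable a : R.
Hypothesis Ha : 0 < a < 1/2.

Lemma gap_pos : 0 < gap a.
Proof. unfold gap. apply Rdiv_lt_0_compat; lra. Qed.

Lemma mul_gap : a * gap a = (1 - 2 * a) / 4.
Proof. unfold gap. field. lra. Qed.

Lemma cantor_level_bounds D n t : 0 <= D ->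
  cantor_level a (-D) (1 + D) n t -> - D * a ^ n <= t <= 1 + D * a ^ n.
Proof.
  intros HD; revert t; induction n as [|n IH]; intro t; simpl; [lra|].
  intros [s [Hs Ht]]. specialize (IH s Hs).
  assert (0 <= D * a ^ n) by (apply Rmult_le_pos; [lra|apply pow_le; lra]).
  destruct Ht as [-> | ->]; split; nra.
Qed.

Lemma cantor_level_in D n t : 0 <= D ->
  cantor_level a (-D) (1 + D) n t -> - D <= t <= 1 + D.
Proof.
  intros HD Ht. apply cantor_level_bounds in Ht; [|lra].
  assert (a ^ n <= 1) by (apply pow_le_one; lra).
  assert (0 <= a ^ n) by (apply pow_le; lra). nra.
Qed.

Lemma cantor_level_drop lo hi lo' hi' m n t :
  (forall s, cantor_level a lo hi m s -> lo' <= s <= hi') ->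
  cantor_level a lo hi (n + m) t -> cantor_level a lo' hi' n t.
Proof.
  intros Hm; revert t; induction n as [|n IH]; intro t; simpl; [apply Hm|].
  intros [s [Hs Ht]]; exists s; auto.
Qed.

Lemma cantor_level_left e n t : 0 < e <= gap a ->
  cantor_level a (-e) (1 + e) (S n) t -> t <= 1/2 -> cantor_level a (-e) (1 + e) n (t / a).
Proof.
  intros He [s [Hs [Ht|Ht]]] Hle.
  - replace (t / a) with s by (subst t; field; lra). exact Hs.
  - exfalso. pose proof (cantor_level_in e n s ltac:(lra) Hs). pose proof mul_gap.
    assert (a * e <= a * gap a) by (apply Rmult_le_compat_l; lra). nra.
Qed.

Lemma cantor_level_right e n t : 0 < e <= gap a ->
  cantor_level a (-e) (1 + e) (S n) t -> 1/2 < t ->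
  cantor_level a (-e) (1 + e) n ((t - (1 - a)) / a).
Proof.
  intros He [s [Hs [Ht|Ht]]] Hgt.
  - exfalso. pose proof (cantor_level_in e n s ltac:(lra) Hs). pose proof mul_gap.
    assert (a * e <= a * gap a) by (apply Rmult_le_compat_l; lra). nra.
  - replace ((t - (1 - a)) / a) with s by (subst t; field; lra). exact Hs.
Qed.

Lemma cantor_level_limit n t :
  (forall e, 0 < e <= gap a -> cantor_level a (-e) (1 + e) n t) -> cantor_approx a n t.
Proof.
  pose proof gap_pos as Hgap.
  revert t; induction n as [|n IH]; intros t H; simpl.
  - split; apply (Rle_plus_small_epsilon _ _ (gap a)); auto; intros e He;
      specialize (H e He); simpl in H; lra.
  - destruct (Rle_or_lt t (1/2)) as [Hl|Hr].
    + exists (t / a). split; [|left; field; lra].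
      apply IH. intros e He. apply cantor_level_left; auto.
    + exists ((t - (1 - a)) / a). split; [|right; field; lra].
      apply IH. intros e He. apply cantor_level_right; auto.
Qed.

Lemma Cantor_of_levels D t : 0 <= D ->
  (forall n, cantor_level a (-D) (1 + D) n t) -> Cantor a t.
Proof.
  intros HD H n. apply cantor_level_limit. intros e He.
  destruct (exists_pow_small a D e ltac:(lra) HD ltac:(lra)) as [m Hm].
  apply (cantor_level_drop (-D) (1 + D) _ _ m n t); [|apply H].
  intros s Hs. apply cantor_level_bounds in Hs; lra.
Qed.

Lemma cantor_approx_01 n t : cantor_approx a n t -> 0 <= t <= 1.
Proof.
  revert t; induction n as [|n IH]; intro t; simpl; [tauto|].
  intros [s [Hs [-> | ->]]]; specialize (IH s Hs); split; nra.
Qed.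

Lemma Cantor_left t : Cantor a t -> t <= 1/2 -> Cantor a (t / a) /\ t <= a.
Proof.
  intros H Ht.
  assert (K : forall n, exists s, cantor_approx a n s /\ t = a * s).
  { intro n. destruct (H (S n)) as [s [Hs [E|E]]]; [exists s; auto|].
    apply cantor_approx_01 in Hs. exfalso; subst t; nra. }
  split.
  - intro n. destruct (K n) as [s [Hs E]].
    replace (t / a) with s by (subst t; field; lra). exact Hs.
  - destruct (K O) as [s [Hs E]]. simpl in Hs. nra.
Qed.

Lemma Cantor_right t : Cantor a t -> 1/2 < t ->
  Cantor a ((t - (1 - a)) / a) /\ 1 - a <= t.
Proof.
  intros H Ht.
  assert (K : forall n, exists s, cantor_approx a n s /\ t = a * s + 1 - a).
  { intro n. destruct (H (S n)) as [s [Hs [E|E]]]; [|exists s; auto].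
    apply cantor_approx_01 in Hs. exfalso; subst t; nra. }
  split.
  - intro n. destruct (K n) as [s [Hs E]].
    replace ((t - (1 - a)) / a) with s by (subst t; field; lra). exact Hs.
  - destruct (K O) as [s [Hs E]]. simpl in Hs. nra.
Qed.

Lemma Cantor_branches t : Cantor a t -> Cantor a (a * t) /\ Cantor a (a * t + 1 - a).
Proof.
  intros H. pose proof (H O) as H0; simpl in H0.
  split; intros [|n]; simpl; try (split; nra); exists t; auto.
Qed.

End CantorSet.

Lemma Bmap_fst_range a x y : 0 <= x < 1 -> 0 <= fst (Bmap a (x, y)) < 1.
Proof. intros H; unfold Bmap; destruct (Rlt_dec x (1/2)); simpl; lra. Qed.

Lemma Bmap_snd_cases a x y :
  snd (Bmap a (x, y)) = a * y \/ snd (Bmap a (x, y)) = a * y + 1 - a.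
Proof. unfold Bmap; destruct (Rlt_dec x (1/2)); simpl; auto. Qed.

Lemma Bmap_snd_gap a x y : 0 < a < 1/2 -> - gap a <= y <= 1 + gap a ->
  - gap a <= snd (Bmap a (x, y)) <= 1 + gap a.
Proof.
  intros Ha Hy. pose proof (gap_pos a Ha). pose proof (mul_gap a Ha).
  destruct (Bmap_snd_cases a x y) as [-> | ->]; split; nra.
Qed.

Lemma Binv_fst_range a x y : 0 <= x < 1 -> 0 <= fst (Binv a (x, y)) < 1.
Proof. intros H; unfold Binv; destruct (Rle_dec y (1/2)); simpl; lra. Qed.

Lemma iter_Binv_fst_range a n p : 0 <= fst p < 1 -> 0 <= fst (Nat.iter n (Binv a) p) < 1.
Proof.
  intros H; induction n as [|n IH]; simpl; auto.
  destruct (Nat.iter n (Binv a) p) as [x y]. apply Binv_fst_range; auto.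
Qed.

Lemma Bmap_Binv a x y : 0 < a -> 0 <= x < 1 -> Bmap a (Binv a (x, y)) = (x, y).
Proof.
  intros Ha Hx. unfold Binv; destruct (Rle_dec y (1/2)); unfold Bmap.
  - destruct (Rlt_dec (x / 2) (1/2)); [|lra]. f_equal; field; lra.
  - destruct (Rlt_dec ((x + 1) / 2) (1/2)); [lra|]. f_equal; field; lra.
Qed.

Lemma Binv_Bmap a x y : 0 < a < 1/2 -> - gap a <= y <= 1 + gap a ->
  Binv a (Bmap a (x, y)) = (x, y).
Proof.
  intros Ha Hy. pose proof (gap_pos a Ha). pose proof (mul_gap a Ha).
  unfold Bmap; destruct (Rlt_dec x (1/2)); unfold Binv.
  - destruct (Rle_dec (a * y) (1/2)); [|nra]. f_equal; field; lra.
  - destruct (Rle_dec (a * y + 1 - a) (1/2)); [nra|]. f_equal; field; lra.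
Qed.

Definition cantor_strip (a : R) (p : R * R) : Prop := 0 <= fst p < 1 /\ Cantor a (snd p).

Lemma Binv_cantor_strip a p : 0 < a < 1/2 -> cantor_strip a p -> cantor_strip a (Binv a p).
Proof.
  intros Ha; destruct p as [x y]; intros [Hx Hy]; simpl in *.
  split; [apply Binv_fst_range; auto|].
  unfold Binv; destruct (Rle_dec y (1/2)); simpl.
  - apply Cantor_left; auto.
  - apply Cantor_right; auto; lra.
Qed.

Lemma iter_Binv_cantor_strip a n p : 0 < a < 1/2 ->
  cantor_strip a p -> cantor_strip a (Nat.iter n (Binv a) p).
Proof. intros Ha H; induction n; simpl; auto. apply Binv_cantor_strip; auto. Qed.

Lemma ex_series_geom_scal K b : 0 <= b < 1 -> ex_series (fun i => K * b ^ i).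
Proof.
  intros Hb. exact (ex_series_scal_l K _ (ex_series_geom b ltac:(rewrite Rabs_pos_eq; lra))).
Qed.

Lemma Series_geom_scal K b : 0 <= b < 1 -> Series (fun i => K * b ^ i) = K / (1 - b).
Proof.
  intros Hb. rewrite Series_scal_l, Series_geom by (rewrite Rabs_pos_eq; lra). field; lra.
Qed.

Lemma ex_series_Rabs_dominated (u c : nat -> R) :
  (forall i, Rabs (u i) <= c i) -> ex_series c -> ex_series (fun i => Rabs (u i)).
Proof.
  intros H Hc. apply (ex_series_le (fun i => Rabs (u i)) c); auto.
  intro n. unfold norm; simpl. unfold abs; simpl. rewrite Rabs_Rabsolu. auto.
Qed.

Lemma ex_series_dominated (u c : nat -> R) :
  (forall i, Rabs (u i) <= c i) -> ex_series c -> ex_series u.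
Proof. intros H Hc. apply (ex_series_le u c); auto. Qed.

Lemma Series_Rabs_dominated (u c : nat -> R) :
  (forall i, Rabs (u i) <= c i) -> ex_series c -> Rabs (Series u) <= Series c.
Proof.
  intros H Hc. eapply Rle_trans.
  - apply Series_Rabs, (ex_series_Rabs_dominated u c); auto.
  - apply Series_le; auto. intro n; split; auto. apply Rabs_pos.
Qed.

Notation hsum a b g x y := (Series (hterm a b g x y)).

Lemma bounded_by_nonneg g K : bounded_by g K -> 0 <= K.
Proof. intros H. specialize (H 0 0 ltac:(lra)). pose proof (Rabs_pos (g 0 0)). lra. Qed.

Section Series.
Variables (a b : R) (g : R -> R -> R) (K : R).
Hypotheses (Hb : 0 <= b < 1) (HK : bounded_by g K).

Lemma hterm_abs_le x y i : 0 <= x < 1 -> Rabs (hterm a b g x y i) <= K * b ^ i.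
Proof.
  intros Hx. unfold hterm. rewrite Rabs_mult, Rabs_pos_eq by (apply pow_le; lra).
  rewrite Rmult_comm. apply Rmult_le_compat_r; [apply pow_le; lra|].
  apply HK, (iter_Binv_fst_range a (S i) (x, y)); auto.
Qed.

Lemma ex_series_hterm x y : 0 <= x < 1 -> ex_series (hterm a b g x y).
Proof.
  intros Hx. apply (ex_series_dominated _ (fun i => K * b ^ i)).
  - intro; apply hterm_abs_le; auto.
  - apply ex_series_geom_scal; auto.
Qed.

Lemma hsum_abs_le x y : 0 <= x < 1 -> Rabs (hsum a b g x y) <= K / (1 - b).
Proof.
  intros Hx. rewrite <- Series_geom_scal by auto.
  apply Series_Rabs_dominated; [|apply ex_series_geom_scal; auto].
  intro; apply hterm_abs_le; auto.
Qed.

Lemma hsum_Bmap x y : 0 < a < 1/2 -> 0 <= x < 1 -> - gap a <= y <= 1 + gap a ->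
  hsum a b g (fst (Bmap a (x, y))) (snd (Bmap a (x, y))) = g x y + b * hsum a b g x y.
Proof.
  intros Ha Hx Hy. pose proof (Binv_Bmap a x y Ha Hy) as E.
  rewrite Series_incr_1 by (apply ex_series_hterm, Bmap_fst_range; auto).
  rewrite <- Series_scal_l. f_equal.
  - unfold hterm. rewrite <- surjective_pairing.
    change (Nat.iter 1 (Binv a) (Bmap a (x, y))) with (Binv a (Bmap a (x, y))).
    rewrite E. cbn [fst snd pow]. ring.
  - apply Series_ext. intro n. unfold hterm. rewrite <- surjective_pairing.
    rewrite (Nat.iter_succ_r (S n)), E. cbn [pow]. ring.
Qed.

End Series.

Definition Y4 (p : pt4) : R := snd (fst (fst p)).
Definition W4 (p : pt4) : R := snd p.

Lemma hg_hg_inv a b g q : hg a b g (hg_inv a b g q) = q.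
Proof. destruct q as [[[x y] z] w]. simpl. f_equal. ring. Qed.

Lemma hg_inv_hg a b g p : hg_inv a b g (hg a b g p) = p.
Proof. destruct p as [[[x y] z] w]. simpl. f_equal. ring. Qed.

Lemma Bg_eq a b g x y z w : Bg a b g (x, y, z, w) =
  (fst (Bmap a (x, y)), snd (Bmap a (x, y)), fst (Bmap b (z, w)), snd (Bmap b (z, w)) + g x y).
Proof.
  unfold Bg. destruct (Bmap a (x, y)) as [x' y']. destruct (Bmap b (z, w)) as [z' w'].
  reflexivity.
Qed.

Lemma Bmap_add_snd b z w c :
  Bmap b (z, w + c) = (fst (Bmap b (z, w)), snd (Bmap b (z, w)) + b * c).
Proof. unfold Bmap. destruct (Rlt_dec z (1/2)); simpl; f_equal; ring. Qed.

Section Conjugacy.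
Variables (a b : R) (g : R -> R -> R) (K : R).
Hypotheses (Ha : 0 < a < 1/2) (Hb : 0 < b < 1/2) (HK : bounded_by g K).

Lemma hg_inv_Bg x y z w : 0 <= x < 1 -> - gap a <= y <= 1 + gap a ->
  hg_inv a b g (Bg a b g (x, y, z, w)) = B0 a b (hg_inv a b g (x, y, z, w)).
Proof.
  intros Hx Hy. unfold B0. rewrite !Bg_eq. cbn [hg_inv]. rewrite Bg_eq.
  rewrite (hsum_Bmap a b g K) by (auto; lra).
  replace (w - hsum a b g x y) with (w + - hsum a b g x y) by ring.
  rewrite Bmap_add_snd. cbn [fst snd]. f_equal. ring.
Qed.

Lemma hg_inv_Bg_hg v : Aset a b v -> B0 a b v = hg_inv a b g (Bg a b g (hg a b g v)).
Proof.
  destruct v as [[[x y] z] w]. intros (Hx & Hy & _).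
  pose proof (Hy O) as Hy0; simpl in Hy0. pose proof (gap_pos a Ha).
  cbn [hg]. rewrite hg_inv_Bg by (auto; lra). f_equal.
  symmetry. apply (hg_inv_hg a b g (x, y, z, w)).
Qed.

Lemma hg_B0 v : Aset a b v -> hg a b g (B0 a b v) = Bg a b g (hg a b g v).
Proof. intros Hv. rewrite hg_inv_Bg_hg by auto. apply hg_hg_inv. Qed.

End Conjugacy.

Lemma B0_Aset a b v : 0 < a < 1/2 -> 0 < b < 1/2 -> Aset a b v -> Aset a b (B0 a b v).
Proof.
  intros Ha Hb. destruct v as [[[x y] z] w]. intros (Hx & Hy & Hz & Hw).
  unfold B0. rewrite Bg_eq, Rplus_0_r. repeat split; try (apply Bmap_fst_range; auto).
  - destruct (Bmap_snd_cases a x y) as [-> | ->]; apply Cantor_branches; auto.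
  - destruct (Bmap_snd_cases b z w) as [-> | ->]; apply Cantor_branches; auto.
Qed.

Lemma B0_onto_Aset a b p : 0 < a < 1/2 -> 0 < b < 1/2 -> Aset a b p ->
  exists p', Aset a b p' /\ B0 a b p' = p.
Proof.
  intros Ha Hb. destruct p as [[[x y] z] w]. intros (Hx & Hy & Hz & Hw).
  destruct (Binv_cantor_strip a (x, y) Ha (conj Hx Hy)) as [H1 H2].
  destruct (Binv_cantor_strip b (z, w) Hb (conj Hz Hw)) as [H3 H4].
  exists (fst (Binv a (x, y)), snd (Binv a (x, y)), fst (Binv b (z, w)), snd (Binv b (z, w))).
  split; [repeat split; tauto|].
  unfold B0. rewrite Bg_eq, <- !surjective_pairing, !Bmap_Binv by (auto; lra).
  simpl. f_equal. ring.
Qed.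

Lemma iter_B0_onto_Aset a b n p : 0 < a < 1/2 -> 0 < b < 1/2 -> Aset a b p ->
  exists p', Aset a b p' /\ Nat.iter n (B0 a b) p' = p.
Proof.
  intros Ha Hb. revert p; induction n as [|n IH]; intros p Hp; [exists p; auto|].
  destruct (B0_onto_Aset a b p Ha Hb Hp) as [p1 [Hp1 <-]].
  destruct (IH p1 Hp1) as [p' [Hp' <-]].
  exists p'; split; auto.
Qed.

Lemma iter_cantor_level (f : pt4 -> pt4) (P : pt4 -> Prop) (c : pt4 -> R) a lo hi n p :
  (forall q, P q -> P (f q)) ->
  (forall q, P q -> c (f q) = a * c q \/ c (f q) = a * c q + 1 - a) ->
  P p -> lo <= c p <= hi -> cantor_level a lo hi n (c (Nat.iter n f p)).
Proof.
  intros Hinv Hstep Hp Hc.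
  enough (P (Nat.iter n f p) /\ cantor_level a lo hi n (c (Nat.iter n f p))) by tauto.
  induction n as [|n [IH1 IH2]]; simpl; auto.
  split; auto. exists (c (Nat.iter n f p)); auto.
Qed.

Section Attractor.
Variables (a b : R) (g : R -> R -> R) (delta gn : R).
Hypotheses (Ha : 0 < a < 1/2) (Hb : 0 < b < 1/2) (Hd : 0 < delta) (Hgn : bounded_by g gn).

Lemma gn_div_nonneg : 0 <= gn / (1 - b).
Proof. pose proof (bounded_by_nonneg g gn Hgn). apply Rdiv_le_0_compat; lra. Qed.

Lemma hg_Vset p : Aset a b p -> Vset b delta gn (hg a b g p).
Proof.
  destruct p as [[[x y] z] w]. intros (Hx & Hy & Hz & Hw).
  pose proof (Hy O) as Hy0. pose proof (Hw O) as Hw0. simpl in Hy0, Hw0.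
  pose proof (hsum_abs_le a b g gn ltac:(lra) Hgn x y Hx) as HS.
  apply Rabs_le_between in HS. simpl. lra.
Qed.

Lemma hg_Ag p : Aset a b p -> Ag a b g delta gn (hg a b g p).
Proof.
  intros Hp n. destruct (iter_B0_onto_Aset a b n p Ha Hb Hp) as [p' [Hp' <-]].
  exists (hg a b g p'). split; [apply hg_Vset; auto|]. clear Hp.
  induction n as [|n IH]; [reflexivity|].
  assert (Hn : Aset a b (Nat.iter n (B0 a b) p')).
  { clear IH. induction n as [|n IHn]; auto. rewrite Nat.iter_succ. apply B0_Aset; auto. }
  rewrite !Nat.iter_succ, IH. symmetry. apply hg_B0 with (K := gn); auto.
Qed.

Lemma Bg_Vset p : Vset b delta gn p -> Vset b delta gn (Bg a b g p).
Proof.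
  destruct p as [[[x y] z] w]. intros (Hx & Hy & Hz & Hw).
  rewrite Bg_eq. pose proof gn_div_nonneg.
  assert (Hg : Rabs (g x y) <= gn) by (apply Hgn; auto). apply Rabs_le_between in Hg.
  assert (E : gn = (1 - b) * (gn / (1 - b))) by (field; lra).
  cbv beta iota. repeat split; try (apply Bmap_fst_range; auto).
  all: first [destruct (Bmap_snd_cases a x y) as [-> | ->] | destruct (Bmap_snd_cases b z w) as [-> | ->]]; nra.
Qed.

Lemma iter_Bg_Vset n p : Vset b delta gn p -> Vset b delta gn (Nat.iter n (Bg a b g) p).
Proof. intros Hp. induction n; auto. rewrite Nat.iter_succ. apply Bg_Vset; auto. Qed.

Lemma Ag_Vset q : Ag a b g delta gn q -> Vset b delta gn q.
Proof. intros Hq. destruct (Hq O) as [p [Hp <-]]. exact Hp. Qed.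

Lemma iter_Bg_y_level n p : Vset b delta gn p ->
  cantor_level a (- delta) (1 + delta) n (Y4 (Nat.iter n (Bg a b g) p)).
Proof.
  intros Hp. apply (iter_cantor_level _ (fun _ => True)); auto.
  - intros [[[x y] z] w] _. rewrite Bg_eq. apply Bmap_snd_cases.
  - destruct p as [[[x y] z] w]. unfold Y4; simpl in *. tauto.
Qed.

(* Once the y-coordinate is within [gap a] of [0,1], h_g^{-1} conjugates B_g to B, so the
   w-coordinate of h_g^{-1} follows the Cantor construction for beta. *)
Lemma Ag_hg_inv_w_level q n : Ag a b g delta gn q ->
  cantor_level b (- (delta + 2 * (gn / (1 - b)))) (1 + (delta + 2 * (gn / (1 - b)))) n
    (W4 (hg_inv a b g q)).
Proof.
  intros Hq. pose proof gn_div_nonneg as Hc. pose proof (gap_pos a Ha) as Hgap.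
  destruct (exists_pow_small a delta (gap a)) as [m Hm]; try lra.
  set (R0 := fun p => Vset b delta gn p /\ - gap a <= Y4 p <= 1 + gap a).
  destruct (Hq (n + m)%nat) as [p0 [H0 E]]. rewrite Nat.iter_add in E.
  pose proof (iter_Bg_y_level m p0 H0) as Hym. apply (cantor_level_bounds a Ha) in Hym; [|lra].
  set (p1 := Nat.iter m (Bg a b g) p0) in E, Hym.
  assert (HR1 : R0 p1) by (split; [apply iter_Bg_Vset; auto|lra]).
  rewrite <- E. apply (iter_cantor_level _ R0 (fun p => W4 (hg_inv a b g p))); auto.
  - intros [[[x y] z] w] [HV HY]. split; [apply Bg_Vset; auto|].
    unfold Y4 in *; rewrite Bg_eq; cbn [fst snd] in *. apply Bmap_snd_gap; auto.
  - intros [[[x y] z] w] [(Hx & _) HY]. unfold Y4 in HY; cbn [fst snd] in HY.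
    rewrite hg_inv_Bg with (K := gn) by (auto; lra).
    unfold B0, W4. cbn [hg_inv]. rewrite Bg_eq. cbn [snd]. rewrite Rplus_0_r.
    apply Bmap_snd_cases.
  - destruct p1 as [[[x y] z] w]. destruct HR1 as [(Hx & _ & _ & Hw) _].
    pose proof (hsum_abs_le a b g gn ltac:(lra) Hgn x y Hx) as HS.
    apply Rabs_le_between in HS. unfold W4; simpl. lra.
Qed.

Lemma Ag_hg_inv_Aset q : Ag a b g delta gn q -> Aset a b (hg_inv a b g q).
Proof.
  intros Hq. pose proof gn_div_nonneg.
  pose proof (fun n => Ag_hg_inv_w_level q n Hq) as Hw.
  assert (Hy : forall n, cantor_level a (- delta) (1 + delta) n (Y4 q)).
  { intro n. destruct (Hq n) as [p0 [H0 <-]]. apply iter_Bg_y_level; auto. }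
  pose proof (Ag_Vset q Hq) as HV.
  destruct q as [[[x y] z] w]. destruct HV as (Hx & _ & Hz & _).
  cbn [hg_inv]. repeat split; try lra.
  - apply (Cantor_of_levels a Ha delta); auto; lra.
  - apply (Cantor_of_levels b Hb (delta + 2 * (gn / (1 - b)))); auto; lra.
Qed.

Lemma Ag_iff q : Ag a b g delta gn q <-> exists p, Aset a b p /\ hg a b g p = q.
Proof.
  split.
  - intros Hq. exists (hg_inv a b g q). split; [apply Ag_hg_inv_Aset; auto|apply hg_hg_inv].
  - intros [p [Hp <-]]. apply hg_Ag; auto.
Qed.

End Attractor.

Lemma Rabs_le_sqrt_sum_sq u v : Rabs u <= sqrt (u ^ 2 + v ^ 2).
Proof.
  rewrite <- sqrt_Rsqr_abs. apply sqrt_le_1_alt. unfold Rsqr.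
  pose proof (pow2_ge_0 v). nra.
Qed.

Lemma lipschitz_of_gradient g gx gy L x y x' y' :
  (forall u v, 0 < u < 1 -> differentiable_pt_lim g u v (gx u v) (gy u v)) ->
  (forall u v, 0 < u < 1 -> Rabs (gx u v) <= L /\ Rabs (gy u v) <= L) ->
  0 < x < 1 -> 0 < x' < 1 ->
  Rabs (g x' y' - g x y) <= L * (Rabs (x' - x) + Rabs (y' - y)).
Proof.
  intros Hd Hgrad Hx Hx'.
  set (dx := x' - x). set (dy := y' - y).
  assert (Hin : forall t, 0 <= t <= 1 -> 0 < x + t * dx < 1).
  { intros t Ht. unfold dx. destruct (Rle_or_lt x x'); split; nra. }
  destruct (MVT_cor2 (fun t => g (x + t * dx) (y + t * dy))
    (fun t => gx (x + t * dx) (y + t * dy) * dx + gy (x + t * dx) (y + t * dy) * dy) 0 1)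
    as [c [Ec Hc]]; [lra| |].
  - intros c Hc.
    apply (derivable_pt_lim_comp_2d g (fun t => x + t * dx) (fun t => y + t * dy)).
    + apply Hd, Hin, Hc.
    + apply is_derive_Reals. auto_derive; auto; ring.
    + apply is_derive_Reals. auto_derive; auto; ring.
  - replace (g x' y' - g x y) with (g (x + 1 * dx) (y + 1 * dy) - g (x + 0 * dx) (y + 0 * dy))
      by (unfold dx, dy; f_equal; f_equal; ring).
    rewrite Ec, Rminus_0_r, Rmult_1_r.
    destruct (Hgrad (x + c * dx) (y + c * dy) (Hin c ltac:(lra))) as [H1 H2].
    eapply Rle_trans; [apply Rabs_triang|]. rewrite !Rabs_mult.
    pose proof (Rabs_pos dx). pose proof (Rabs_pos dy).
    pose proof (Rabs_pos (gx (x + c * dx) (y + c * dy))).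
    pose proof (Rabs_pos (gy (x + c * dx) (y + c * dy))). nra.
Qed.

Lemma lipschitz_to_boundary g L :
  (forall x y, 0 <= x < 1 -> forall eps, 0 < eps -> exists delta, 0 < delta /\
     forall x' y', 0 <= x' < 1 -> Rabs (x' - x) < delta -> Rabs (y' - y) < delta ->
       Rabs (g x' y' - g x y) < eps) ->
  0 <= L ->
  (forall x y x' y', 0 < x < 1 -> 0 < x' < 1 ->
     Rabs (g x' y' - g x y) <= L * (Rabs (x' - x) + Rabs (y' - y))) ->
  forall x y x' y', 0 <= x < 1 -> 0 <= x' < 1 ->
     Rabs (g x' y' - g x y) <= L * (Rabs (x' - x) + Rabs (y' - y)).
Proof.
  intros Hc HL Hint x y x' y' Hx Hx'. apply Rle_plus_epsilon. intros eps Heps.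
  destruct (Hc x y Hx (eps / 2)) as [d1 [Hd1 H1]]; [lra|].
  destruct (Hc x' y' Hx' (eps / 2)) as [d2 [Hd2 H2]]; [lra|].
  set (e := Rmin (1/2) (Rmin d1 d2)).
  assert (He : 0 < e <= 1/2) by (split; [repeat apply Rmin_pos; lra|apply Rmin_l]).
  assert (He1 : e <= d1) by (eapply Rle_trans; [apply Rmin_r|apply Rmin_l]).
  assert (He2 : e <= d2) by (eapply Rle_trans; [apply Rmin_r|apply Rmin_r]).
  (* interior points approaching (x, y) and (x', y') along the segments towards x = 1/2 *)
  set (u := x + e * (1/2 - x)). set (u' := x' + e * (1/2 - x')).
  assert (Hu : 0 < u < 1) by (unfold u; nra). assert (Hu' : 0 < u' < 1) by (unfold u'; nra).
  assert (Hux : Rabs (u - x) < d1) by (unfold u; apply Rabs_def1; nra).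
  assert (Hux' : Rabs (u' - x') < d2) by (unfold u'; apply Rabs_def1; nra).
  assert (Huu : Rabs (u' - u) <= Rabs (x' - x)).
  { unfold u, u'. replace (x' + e * (1/2 - x') - (x + e * (1/2 - x))) with ((1 - e) * (x' - x)) by ring.
    rewrite Rabs_mult, Rabs_pos_eq by lra. pose proof (Rabs_pos (x' - x)). nra. }
  pose proof (H1 u y ltac:(lra) Hux ltac:(rewrite Rminus_diag, Rabs_R0; lra)) as A1.
  pose proof (H2 u' y' ltac:(lra) Hux' ltac:(rewrite Rminus_diag, Rabs_R0; lra)) as A2.
  pose proof (Hint u y u' y' Hu Hu') as A3.
  replace (g x' y' - g x y) with ((g u' y' - g u y) - (g u' y' - g x' y') + (g u y - g x y)) by ring.
  eapply Rle_trans; [apply Rabs_triang|].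
  eapply Rle_trans; [apply Rplus_le_compat_r, Rabs_triang|].
  rewrite Rabs_Ropp. assert (L * Rabs (u' - u) <= L * Rabs (x' - x)) by (apply Rmult_le_compat_l; auto).
  lra.
Qed.

Lemma Cb1_lipschitz g : Cb1 g -> exists L, 0 <= L /\ forall x y x' y',
  0 <= x < 1 -> 0 <= x' < 1 -> Rabs (g x' y' - g x y) <= L * (Rabs (x' - x) + Rabs (y' - y)).
Proof.
  intros (_ & (gx & gy & Hd & K' & HK') & Hc).
  assert (HK'0 : 0 <= K').
  { specialize (HK' (1/2) 0 ltac:(lra)). pose proof (sqrt_pos (gx (1/2) 0 ^ 2 + gy (1/2) 0 ^ 2)). lra. }
  exists K'. split; auto. apply lipschitz_to_boundary; auto.
  intros x y x' y' Hx Hx'. apply (lipschitz_of_gradient g gx gy); auto.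
  - intros u v Hu. apply Hd, Hu.
  - intros u v Hu. specialize (HK' u v Hu). split.
    + eapply Rle_trans; [apply (Rabs_le_sqrt_sum_sq _ (gy u v))|]; auto.
    + eapply Rle_trans; [apply (Rabs_le_sqrt_sum_sq _ (gx u v))|]. rewrite Rplus_comm; auto.
Qed.

Lemma Rabs_div_pos u c : 0 < c -> Rabs (u / c) = Rabs u / c.
Proof. intros Hc. unfold Rdiv. rewrite Rabs_mult, Rabs_inv, (Rabs_pos_eq c) by lra. reflexivity. Qed.

Section Separation.
Variable a : R.
Hypothesis Ha : 0 < a < 1/2.

Lemma Binv_pair_cases p p' : cantor_strip a p -> cantor_strip a p' ->
  (Rabs (fst (Binv a p) - fst (Binv a p')) <= Rabs (fst p - fst p') /\
   Rabs (snd (Binv a p) - snd (Binv a p')) = Rabs (snd p - snd p') / a)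
  \/ 1 - 2 * a <= Rabs (snd p - snd p').
Proof.
  destruct p as [u v]; destruct p' as [u' v']. intros [Hu Hv] [Hu' Hv']. cbn [fst snd] in *.
  pose proof (Rabs_pos (u - u')).
  unfold Binv. destruct (Rle_dec v (1/2)) as [Hl|Hr]; destruct (Rle_dec v' (1/2)) as [Hl'|Hr'];
    cbn [fst snd].
  - left. split.
    + replace (u / 2 - u' / 2) with ((u - u') / 2) by field. rewrite Rabs_div_pos; lra.
    + replace (v / a - v' / a) with ((v - v') / a) by (field; lra). apply Rabs_div_pos; lra.
  - right. destruct (Cantor_left a Ha v Hv Hl) as [_ H1].
    destruct (Cantor_right a Ha v' Hv' ltac:(lra)) as [_ H2].
    rewrite Rabs_minus_sym, Rabs_pos_eq; lra.
  - right. destruct (Cantor_left a Ha v' Hv' Hl') as [_ H1].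
    destruct (Cantor_right a Ha v Hv ltac:(lra)) as [_ H2].
    rewrite Rabs_pos_eq; lra.
  - left. split.
    + replace ((u + 1) / 2 - (u' + 1) / 2) with ((u - u') / 2) by field. rewrite Rabs_div_pos; lra.
    + replace ((v - (1 - a)) / a - (v' - (1 - a)) / a) with ((v - v') / a) by (field; lra).
      apply Rabs_div_pos; lra.
Qed.

Lemma iter_Binv_pair_cases n p p' : cantor_strip a p -> cantor_strip a p' ->
  (Rabs (fst (Nat.iter n (Binv a) p) - fst (Nat.iter n (Binv a) p')) <= Rabs (fst p - fst p') /\
   Rabs (snd (Nat.iter n (Binv a) p) - snd (Nat.iter n (Binv a) p')) = Rabs (snd p - snd p') / a ^ n)
  \/ (1 - 2 * a) * a ^ n <= Rabs (snd p - snd p').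
Proof.
  intros Hp Hp'. induction n as [|n IH].
  - left. simpl. split; [lra|]. field.
  - assert (Han : 0 < a ^ n) by (apply pow_lt; lra).
    rewrite !Nat.iter_succ. change (a ^ S n) with (a * a ^ n).
    destruct IH as [[IH1 IH2]|IH].
    + destruct (Binv_pair_cases _ _ (iter_Binv_cantor_strip a n p Ha Hp)
        (iter_Binv_cantor_strip a n p' Ha Hp')) as [[H1 H2]|H].
      * left. split; [lra|]. rewrite H2, IH2. field. lra.
      * right. rewrite IH2 in H. apply (Rmult_le_compat_r (a ^ n)) in H; [|lra].
        replace (Rabs (snd p - snd p') / a ^ n * a ^ n) with (Rabs (snd p - snd p')) in H
          by (field; lra).
        assert (0 <= (1 - 2 * a) * a ^ n) by (apply Rmult_le_pos; lra). nra.
    + right. assert (0 <= (1 - 2 * a) * a ^ n) by (apply Rmult_le_pos; lra). nra.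
Qed.

End Separation.

Definition modulus (a b K M t : R) : R :=
  Series (fun i => b ^ i * Rmin (2 * K) (M * t / a ^ S i)).

Lemma modulus_term_bounds a b K M t i : 0 < a -> 0 < b -> 0 <= K -> 0 <= M -> 0 <= t ->
  0 <= b ^ i * Rmin (2 * K) (M * t / a ^ S i) <= 2 * K * b ^ i.
Proof.
  intros Ha Hb HK HM Ht.
  assert (0 < a ^ S i) by (apply pow_lt; lra). assert (0 < b ^ i) by (apply pow_lt; lra).
  assert (0 <= M * t / a ^ S i) by (apply Rdiv_le_0_compat; [apply Rmult_le_pos|]; lra).
  pose proof (Rmin_l (2 * K) (M * t / a ^ S i)).
  assert (0 <= Rmin (2 * K) (M * t / a ^ S i)) by (apply Rmin_glb; lra). nra.
Qed.

Lemma ex_series_modulus a b K M t : 0 < a -> 0 < b < 1 -> 0 <= K -> 0 <= M -> 0 <= t ->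
  ex_series (fun i => b ^ i * Rmin (2 * K) (M * t / a ^ S i)).
Proof.
  intros Ha Hb HK HM Ht. apply (ex_series_dominated _ (fun i => 2 * K * b ^ i)).
  - intro i. destruct (modulus_term_bounds a b K M t i) as [H1 H2]; try lra.
    rewrite Rabs_pos_eq; auto.
  - apply ex_series_geom_scal; lra.
Qed.

Section IncrementBound.
Variables (a b : R) (g : R -> R -> R) (K L : R).
Hypotheses (Ha : 0 < a < 1/2) (Hb : 0 < b < 1/2) (HK : bounded_by g K) (HL : 0 <= L)
  (Hlip : forall x y x' y', 0 <= x < 1 -> 0 <= x' < 1 ->
     Rabs (g x' y' - g x y) <= L * (Rabs (x' - x) + Rabs (y' - y))).

(* In the separated case of iter_Binv_pair_cases the trivial bound 2K is at most M |y - y'| / a^n. *)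
Let M := L + 2 * K / (1 - 2 * a).

Lemma M_bounds : L <= M /\ 2 * K <= M * (1 - 2 * a).
Proof.
  pose proof (bounded_by_nonneg g K HK). unfold M. split.
  - assert (0 <= 2 * K / (1 - 2 * a)) by (apply Rdiv_le_0_compat; lra). lra.
  - assert (2 * K / (1 - 2 * a) * (1 - 2 * a) = 2 * K) by (field; lra).
    assert (0 <= L * (1 - 2 * a)) by (apply Rmult_le_pos; lra). nra.
Qed.

Lemma iter_Binv_g_diff n p p' : cantor_strip a p -> cantor_strip a p' ->
  let q := Nat.iter n (Binv a) p in let q' := Nat.iter n (Binv a) p' in
  Rabs (g (fst q) (snd q) - g (fst q') (snd q')) <=
  M * Rabs (fst p - fst p') + Rmin (2 * K) (M * Rabs (snd p - snd p') / a ^ n).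
Proof.
  intros Hp Hp' q q'. pose proof (bounded_by_nonneg g K HK). destruct M_bounds as [HM1 HM2].
  assert (Han : 0 < a ^ n) by (apply pow_lt; lra).
  destruct (iter_Binv_cantor_strip a n p Ha Hp) as [Hq _].
  destruct (iter_Binv_cantor_strip a n p' Ha Hp') as [Hq' _]. fold q in Hq. fold q' in Hq'.
  pose proof (Rabs_pos (fst p - fst p')) as Hx. pose proof (Rabs_pos (snd p - snd p')) as Hy.
  assert (Htriv : Rabs (g (fst q) (snd q) - g (fst q') (snd q')) <= 2 * K).
  { eapply Rle_trans; [apply Rabs_triang|]. rewrite Rabs_Ropp.
    pose proof (HK (fst q) (snd q) Hq). pose proof (HK (fst q') (snd q') Hq'). lra. }
  assert (0 <= M * Rabs (fst p - fst p')) by (apply Rmult_le_pos; lra).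
  destruct (iter_Binv_pair_cases a Ha n p p' Hp Hp') as [[S1 S2]|S3].
  - fold q q' in S1, S2.
    assert (Hlin : Rabs (g (fst q) (snd q) - g (fst q') (snd q')) <=
                   M * Rabs (fst p - fst p') + M * Rabs (snd p - snd p') / a ^ n).
    { rewrite Rabs_minus_sym. eapply Rle_trans; [apply Hlip; auto|].
      rewrite (Rabs_minus_sym (fst q')), (Rabs_minus_sym (snd q')), S2.
      assert (0 <= Rabs (snd p - snd p') / a ^ n) by (apply Rdiv_le_0_compat; lra).
      unfold Rdiv at 2. rewrite Rmult_assoc, <- Rmult_plus_distr_l.
      pose proof (Rabs_pos (fst q - fst q')). unfold Rdiv in *.
      apply Rmult_le_compat; lra. }
    unfold Rmin. destruct (Rle_dec (2 * K) (M * Rabs (snd p - snd p') / a ^ n)); lra.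
  - rewrite Rmin_left; [lra|].
    apply (Rmult_le_reg_r (a ^ n)); auto.
    replace (M * Rabs (snd p - snd p') / a ^ n * a ^ n) with (M * Rabs (snd p - snd p'))
      by (field; lra).
    apply Rle_trans with (M * ((1 - 2 * a) * a ^ n)); [nra|].
    apply Rmult_le_compat_l; lra.
Qed.

Lemma hsum_diff_modulus x y x' y' : cantor_strip a (x, y) -> cantor_strip a (x', y') ->
  Rabs (hsum a b g x y - hsum a b g x' y') <=
  M * Rabs (x - x') / (1 - b) + modulus a b K M (Rabs (y - y')).
Proof.
  intros Hp Hp'. pose proof (bounded_by_nonneg g K HK). destruct M_bounds as [HM1 HM2].
  assert (HM : 0 <= M) by lra.
  destruct Hp as [Hx Hy]; destruct Hp' as [Hx' Hy']. cbn [fst snd] in *.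
  rewrite <- Series_minus by (apply (ex_series_hterm a b g K); auto; lra).
  unfold modulus. rewrite <- (Series_geom_scal (M * Rabs (x - x')) b) by lra.
  rewrite <- Series_plus;
    [| apply ex_series_geom_scal; lra | apply ex_series_modulus; auto; try lra; apply Rabs_pos].
  apply Series_Rabs_dominated.
  - intro i. unfold hterm. rewrite <- Rmult_minus_distr_l, Rabs_mult, Rabs_pos_eq by (apply pow_le; lra).
    pose proof (iter_Binv_g_diff (S i) (x, y) (x', y') (conj Hx Hy) (conj Hx' Hy')) as T.
    cbv zeta in T. cbn [fst snd] in T.
    assert (0 <= b ^ i) by (apply pow_le; lra).
    apply Rmult_le_compat_l with (r := b ^ i) in T; auto. lra.
  - apply (ex_series_plus (fun i => M * Rabs (x - x') * b ^ i));
      [apply ex_series_geom_scal; lra|].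
    apply ex_series_modulus; auto; try lra. apply Rabs_pos.
Qed.

End IncrementBound.

Lemma hsum_diff_le a b g : 0 < a < 1/2 -> 0 < b < 1/2 -> Cb1 g ->
  exists K M, 0 <= K /\ 0 <= M /\ forall x y x' y',
    0 <= x < 1 -> Cantor a y -> 0 <= x' < 1 -> Cantor a y' ->
    Rabs (hsum a b g x y - hsum a b g x' y') <=
    2 * M * Rabs (x - x') + modulus a b K M (Rabs (y - y')).
Proof.
  intros Ha Hb Hg. pose proof Hg as [[K HK] _].
  destruct (Cb1_lipschitz g Hg) as [L [HL Hlip]].
  pose proof (bounded_by_nonneg g K HK).
  set (M := L + 2 * K / (1 - 2 * a)).
  assert (HM : 0 <= M) by (unfold M; assert (0 <= 2 * K / (1 - 2 * a)) by (apply Rdiv_le_0_compat; lra); lra).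
  exists K, M. split; [|split]; auto. intros x y x' y' Hx Hy Hx' Hy'.
  eapply Rle_trans; [apply (hsum_diff_modulus a b g K L); auto; split; auto|].
  apply Rplus_le_compat_r. unfold Rdiv.
  assert (/ (1 - b) <= 2) by (rewrite <- (Rinv_inv 2); apply Rinv_le_contravar; lra).
  assert (0 <= M * Rabs (x - x')) by (apply Rmult_le_pos; [lra|apply Rabs_pos]).
  replace (2 * M * Rabs (x - x')) with (M * Rabs (x - x') * 2) by ring.
  apply Rmult_le_compat_l; auto.
Qed.

Lemma exp_le_compat x y : x <= y -> exp x <= exp y.
Proof. intros [H|<-]; [left; apply exp_increasing; auto|lra]. Qed.

Lemma pow_exp_ln x n : 0 < x -> x ^ n = exp (INR n * ln x).
Proof. intros Hx. rewrite <- ln_pow, exp_ln; auto. apply pow_lt; auto. Qed.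

Lemma ln_neg x : 0 < x < 1 -> ln x < 0.
Proof. intros H. rewrite <- ln_1. apply ln_increasing; lra. Qed.

Lemma rpow_nonneg d rho : 0 <= rpow d rho.
Proof. unfold rpow. destruct (Req_EM_T d 0); [lra|]. left; apply exp_pos. Qed.

Lemma rpow_pos_eq d rho : 0 < d -> rpow d rho = Rpower d rho.
Proof. intros H. unfold rpow. destruct (Req_EM_T d 0); [lra|reflexivity]. Qed.

Lemma rpow_0 rho : rpow 0 rho = 0.
Proof. unfold rpow. destruct (Req_EM_T 0 0); [reflexivity|lra]. Qed.

Lemma rpow_1 t : 0 <= t -> rpow t 1 = t.
Proof.
  intros [Ht| <-]; [rewrite rpow_pos_eq, Rpower_1; lra|apply rpow_0].
Qed.

Lemma rpow_le_compat s t rho : 0 <= s <= t -> 0 <= rho -> rpow s rho <= rpow t rho.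
Proof.
  intros [[Hs| <-] Hst] Hrho.
  - rewrite !rpow_pos_eq by lra. apply Rle_Rpower_l; lra.
  - rewrite rpow_0. apply rpow_nonneg.
Qed.

Lemma le_rpow d D rho : 0 <= d <= D -> 1 <= D -> 0 < rho <= 1 -> d <= D * rpow d rho.
Proof.
  intros [[Hd| <-] HdD] HD Hrho; [|rewrite rpow_0; lra].
  rewrite rpow_pos_eq by lra. pose proof (exp_pos (rho * ln d)) as Hp. unfold Rpower in *.
  destruct (Rle_or_lt d 1) as [H|H].
  - assert (ln d <= 0) by (rewrite <- ln_1; apply ln_le; lra).
    assert (d <= exp (rho * ln d)) by (rewrite <- (exp_ln d) at 1 by lra; apply exp_le_compat; nra).
    nra.
  - assert (0 < ln d) by (rewrite <- ln_1; apply ln_increasing; lra).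
    assert (1 <= exp (rho * ln d)) by (rewrite <- exp_0; apply exp_le_compat; nra). nra.
Qed.

Lemma Rmin_le_Rpower_interp X Y rho : 0 < X -> 0 < Y -> 0 <= rho <= 1 ->
  Rmin X Y <= Rpower X (1 - rho) * Rpower Y rho.
Proof.
  intros HX HY Hrho.
  assert (HXp : 0 < Rpower X (1 - rho)) by apply exp_pos.
  assert (HYp : 0 < Rpower Y rho) by apply exp_pos.
  destruct (Rle_or_lt X Y) as [H|H].
  - rewrite Rmin_left by lra.
    rewrite <- (Rpower_1 X) at 1 by lra. replace 1 with ((1 - rho) + rho) at 1 by ring.
    rewrite Rpower_plus. apply Rmult_le_compat_l; [lra|]. apply Rle_Rpower_l; lra.
  - rewrite Rmin_right by lra.
    rewrite <- (Rpower_1 Y) at 1 by lra. replace 1 with ((1 - rho) + rho) at 1 by ring.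
    rewrite Rpower_plus. apply Rmult_le_compat_r; [lra|]. apply Rle_Rpower_l; lra.
Qed.

Lemma exists_pow_bracket a t : 0 < a < 1 -> 0 < t <= 1 -> exists k, a ^ S k < t <= a ^ k.
Proof.
  intros Ha Ht.
  destruct (pow_lt_1_zero a ltac:(rewrite Rabs_pos_eq; lra) t ltac:(lra)) as [N HN].
  specialize (HN N (le_n _)). rewrite Rabs_pos_eq in HN by (apply pow_le; lra).
  induction N as [|N IH]; [simpl in HN; lra|].
  destruct (Rlt_or_le (a ^ N) t) as [H|H]; [apply IH; auto|]. exists N; split; auto.
Qed.

Lemma pow_mul_div a b X i : 0 < a -> b ^ i * (X / a ^ S i) = (b / a) ^ i * (X / a).
Proof.
  intros Ha. unfold Rdiv. rewrite Rpow_mult_distr, pow_inv. cbn [pow].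
  field. repeat split; try apply pow_nonzero; lra.
Qed.

Lemma Rpower_pow_critical a b n : 0 < a < 1 -> 0 < b ->
  Rpower (a ^ n) (ln b / ln a) = b ^ n.
Proof.
  intros Ha Hb. pose proof (ln_neg a Ha).
  unfold Rpower. rewrite ln_pow, (pow_exp_ln b) by lra. f_equal. field. lra.
Qed.

Lemma critical_exponent_bounds a b : 0 < a -> a < b -> b < 1 -> 0 < ln b / ln a < 1.
Proof.
  intros H1 H2 H3. pose proof (ln_neg a ltac:(lra)). pose proof (ln_neg b ltac:(lra)).
  assert (ln a < ln b) by (apply ln_increasing; lra).
  replace (ln b / ln a) with ((- ln b) / (- ln a)) by (field; lra). split.
  - apply Rdiv_lt_0_compat; lra.
  - apply Rlt_div_l; lra.
Qed.

Section ModulusEstimates.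
Variables (a b K M : R).
Hypotheses (Ha : 0 < a < 1/2) (Hb : 0 < b < 1/2) (HK : 0 <= K) (HM : 0 <= M).

Lemma modulus_0 : modulus a b K M 0 = 0.
Proof.
  unfold modulus. rewrite (Series_ext _ (fun i => 0 * b ^ i)).
  - rewrite Series_geom_scal by lra. field. lra.
  - intro i. rewrite Rmult_0_r, Rdiv_0_l, Rmin_right by lra. ring.
Qed.

Lemma modulus_holder rho : 0 < rho <= 1 -> b < Rpower a rho ->
  exists C, 0 <= C /\ forall t, 0 <= t -> modulus a b K M t <= C * rpow t rho.
Proof.
  intros Hrho Hba. pose proof (ln_neg a ltac:(lra)) as Hla.
  assert (Hlb : ln b < rho * ln a).
  { unfold Rpower in Hba. rewrite <- (ln_exp (rho * ln a)). apply ln_increasing; lra. }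
  set (X := 2 * K + 1). set (Y := (M + 1) / a).
  assert (HX : 0 < X) by (unfold X; lra). assert (HY : 0 < Y) by (unfold Y; apply Rdiv_lt_0_compat; lra).
  set (q := exp (ln b - rho * ln a)).
  assert (Hq : 0 <= q < 1).
  { unfold q. split; [left; apply exp_pos|]. rewrite <- exp_0. apply exp_increasing. lra. }
  set (C0 := Rpower X (1 - rho) * Rpower Y rho).
  assert (HC0 : 0 <= C0) by (unfold C0; pose proof (exp_pos ((1 - rho) * ln X)); pose proof (exp_pos (rho * ln Y)); unfold Rpower; nra).
  exists (C0 / (1 - q)). split; [apply Rdiv_le_0_compat; lra|].
  intros t [Ht| <-]; [|rewrite modulus_0, rpow_0; lra].
  rewrite rpow_pos_eq by auto.
  replace (C0 / (1 - q) * Rpower t rho) with (C0 * Rpower t rho / (1 - q)) by (field; lra).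
  rewrite <- Series_geom_scal by lra. apply Series_le; [|apply ex_series_geom_scal; lra].
  intro i. split; [apply modulus_term_bounds; lra|].
  assert (Hai : 0 < a ^ i) by (apply pow_lt; lra).
  assert (HYi : 0 < Y * t / a ^ i) by (apply Rdiv_lt_0_compat; [apply Rmult_lt_0_compat|]; lra).
  assert (Hmin : Rmin (2 * K) (M * t / a ^ S i) <= Rmin X (Y * t / a ^ i)).
  { apply Rmin_glb.
    - eapply Rle_trans; [apply Rmin_l|]. unfold X; lra.
    - eapply Rle_trans; [apply Rmin_r|]. unfold Y. cbn [pow].
      replace ((M + 1) / a * t / a ^ i) with ((M + 1) * t / (a * a ^ i)) by (field; lra).
      unfold Rdiv. apply Rmult_le_compat_r; [apply Rlt_le, Rinv_0_lt_compat; nra|nra]. }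
  pose proof (Rmin_le_Rpower_interp X (Y * t / a ^ i) rho HX HYi ltac:(lra)) as Hint.
  assert (0 < b ^ i) by (apply pow_lt; lra).
  eapply Rle_trans; [apply Rmult_le_compat_l; [lra|]; eapply Rle_trans; [apply Hmin|apply Hint]|].
  right. unfold C0, q, Rpower. rewrite (pow_exp_ln b), (pow_exp_ln (exp _)) by (try apply exp_pos; lra).
  assert (Eln : ln (Y * t / a ^ i) = ln Y + ln t - INR i * ln a).
  { unfold Rdiv. rewrite ln_mult, ln_mult, ln_Rinv, ln_pow; try lra.
    - apply Rmult_lt_0_compat; lra.
    - apply Rinv_0_lt_compat; lra. }
  rewrite ln_exp, Eln, <- !exp_plus. f_equal. ring.
Qed.

Lemma modulus_head_le t k : a < b -> 0 < t <= a ^ k ->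
  sum_f_R0 (fun i => b ^ i * Rmin (2 * K) (M * t / a ^ S i)) k <=
  M * b ^ S k / (a ^ 2 * (b / a - 1)).
Proof.
  intros Hab Ht. set (r := b / a).
  assert (Hr : 1 < r) by (unfold r; apply Rlt_div_r; lra).
  assert (Hak : 0 < a ^ S k) by (apply pow_lt; lra).
  eapply Rle_trans.
  - apply (sum_Rle _ (fun i => r ^ i * (M * t / a))). intros i _.
    unfold r. rewrite <- pow_mul_div by lra.
    apply Rmult_le_compat_l; [apply pow_le; lra|apply Rmin_r].
  - rewrite <- scal_sum, tech3 by lra.
    replace (M * t / a * ((1 - r ^ S k) / (1 - r))) with (M * t / a * ((r ^ S k - 1) / (r - 1)))
      by (field; lra).
    assert (Hrk : r ^ S k = b ^ S k / a ^ S k)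
      by (unfold r, Rdiv; rewrite Rpow_mult_distr, pow_inv; reflexivity).
    assert (E : M * b ^ S k / (a ^ 2 * (r - 1)) = M * a ^ k / a * (r ^ S k / (r - 1)))
      by (rewrite Hrk; cbn [pow]; field; repeat split; lra).
    rewrite E. pose proof (pow_R1_Rle r (S k) ltac:(lra)).
    apply Rmult_le_compat; unfold Rdiv.
    + apply Rmult_le_pos; [apply Rmult_le_pos|apply Rlt_le, Rinv_0_lt_compat]; lra.
    + apply Rmult_le_pos; [|apply Rlt_le, Rinv_0_lt_compat]; lra.
    + apply Rmult_le_compat_r; [apply Rlt_le, Rinv_0_lt_compat; lra|].
      apply Rmult_le_compat_l; lra.
    + apply Rmult_le_compat_r; [apply Rlt_le, Rinv_0_lt_compat; lra|lra].
Qed.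

Lemma modulus_tail_le t k : 0 <= t ->
  Series (fun j => b ^ (S k + j) * Rmin (2 * K) (M * t / a ^ S (S k + j))) <=
  2 * K * b ^ S k / (1 - b).
Proof.
  intros Ht. rewrite <- (Series_geom_scal (2 * K * b ^ S k) b) by lra.
  apply Series_le; [|apply ex_series_geom_scal; lra].
  intro j. destruct (modulus_term_bounds a b K M t (S k + j)) as [H1 H2]; try lra.
  split; auto. rewrite Rmult_assoc, <- pow_add. exact H2.
Qed.

(* For a^(k+1) < t <= a^k the terms grow geometrically (ratio b/a) up to i = k and then
   decay geometrically (ratio b): both parts are O(b^(k+1)) = O(t^(ln b / ln a)). *)
Lemma modulus_critical : a < b ->
  exists C, 0 <= C /\ forall t, 0 <= t <= 1 -> modulus a b K M t <= C * rpow t (ln b / ln a).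
Proof.
  intros Hab. pose proof (critical_exponent_bounds a b ltac:(lra) Hab ltac:(lra)) as Hrho.
  assert (Hr : 0 < b / a - 1) by (assert (1 < b / a) by (apply Rlt_div_r; lra); lra).
  assert (Ha2 : 0 < a ^ 2) by (apply pow_lt; lra).
  set (C := M / (a ^ 2 * (b / a - 1)) + 2 * K / (1 - b)).
  assert (HC : 0 <= C) by (unfold C; apply Rplus_le_le_0_compat; apply Rdiv_le_0_compat; nra).
  exists C; split; auto. intros t [[Ht| <-] Ht1]; [|rewrite modulus_0, rpow_0; lra].
  rewrite rpow_pos_eq by auto.
  destruct (exists_pow_bracket a t ltac:(lra) (conj Ht Ht1)) as [k [Hk1 Hk2]].
  unfold modulus. rewrite (Series_incr_n _ (S k)) by (lia || apply ex_series_modulus; lra).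
  cbn [Init.Nat.pred].
  pose proof (modulus_head_le t k Hab (conj Ht Hk2)) as Hhead.
  pose proof (modulus_tail_le t k ltac:(lra)) as Htail.
  assert (Hpow : b ^ S k <= Rpower t (ln b / ln a)).
  { rewrite <- (Rpower_pow_critical a b (S k)) by lra.
    apply Rle_Rpower_l; [lra|split; [apply pow_lt|]; lra]. }
  assert (C * b ^ S k <= C * Rpower t (ln b / ln a)) by (apply Rmult_le_compat_l; auto).
  assert (E : C * b ^ S k = M * b ^ S k / (a ^ 2 * (b / a - 1)) + 2 * K * b ^ S k / (1 - b))
    by (unfold C; field; repeat split; lra).
  lra.
Qed.

End ModulusEstimates.

(* [hg a b g] and [hg_inv a b g] are convertible to the shears by [hsum a b g] and by its
   opposite. *)
Definition shear (S : R -> R -> R) (p : pt4) : pt4 :=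
  let '(x, y, z, w) := p in (x, y, z, w + S x y).

Lemma sqrt_add_sq_le A D E : 0 <= A -> sqrt (A + (D + E) ^ 2) <= sqrt (A + D ^ 2) + Rabs E.
Proof.
  intros HA. set (s := sqrt (A + D ^ 2)).
  assert (Hs0 : 0 <= s) by apply sqrt_pos.
  assert (Hs2 : s * s = A + D ^ 2) by (apply sqrt_sqrt; nra).
  assert (HD : Rabs D <= s).
  { apply Rsqr_incr_0_var; [|auto]. unfold Rsqr. rewrite <- Rabs_mult, Rabs_pos_eq by nra. nra. }
  assert (HE : 0 <= Rabs E) by apply Rabs_pos.
  assert (HDE : D * E <= Rabs D * Rabs E) by (rewrite <- Rabs_mult; apply Rle_abs).
  assert (HE2 : Rabs E * Rabs E = E * E) by (rewrite <- Rabs_mult, Rabs_pos_eq; nra).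
  rewrite <- (sqrt_pow2 (s + Rabs E)) by lra. apply sqrt_le_1_alt.
  assert (Rabs D * Rabs E <= s * Rabs E) by (apply Rmult_le_compat_r; auto). nra.
Qed.

Lemma dist4_shift x y z w x' y' z' w' s s' :
  dist4 (x, y, z, w + s) (x', y', z', w' + s') <= dist4 (x, y, z, w) (x', y', z', w') + Rabs (s - s').
Proof.
  unfold dist4. replace (w + s - (w' + s')) with ((w - w') + (s - s')) by ring.
  apply sqrt_add_sq_le. repeat apply Rplus_le_le_0_compat; apply pow2_ge_0.
Qed.

Lemma dist4_unshift x y z w x' y' z' w' s s' :
  dist4 (x, y, z, w) (x', y', z', w') <= dist4 (x, y, z, w + s) (x', y', z', w' + s') + Rabs (s - s').
Proof.
  pose proof (dist4_shift x y z (w + s) x' y' z' (w' + s') (- s) (- s')) as H.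
  replace (w + s + - s) with w in H by ring. replace (w' + s' + - s') with w' in H by ring.
  replace (- s - - s') with (- (s - s')) in H by ring. rewrite Rabs_Ropp in H. exact H.
Qed.

Lemma Rmax_le_dist4 x y z w x' y' z' w' :
  Rmax (Rabs (x - x')) (Rabs (y - y')) <= dist4 (x, y, z, w) (x', y', z', w').
Proof.
  pose proof (pow2_ge_0 (x - x')). pose proof (pow2_ge_0 (y - y')).
  pose proof (pow2_ge_0 (z - z')). pose proof (pow2_ge_0 (w - w')).
  unfold dist4. apply Rmax_lub; rewrite <- sqrt_Rsqr_abs; apply sqrt_le_1_alt; unfold Rsqr; nra.
Qed.

Lemma dist4_le_sum x y z w x' y' z' w' :
  dist4 (x, y, z, w) (x', y', z', w') <= Rabs (x - x') + Rabs (y - y') + Rabs (z - z') + Rabs (w - w').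
Proof.
  unfold dist4.
  set (A := Rabs (x - x')). set (B := Rabs (y - y')). set (C := Rabs (z - z')). set (D := Rabs (w - w')).
  assert (0 <= A) by apply Rabs_pos. assert (0 <= B) by apply Rabs_pos.
  assert (0 <= C) by apply Rabs_pos. assert (0 <= D) by apply Rabs_pos.
  rewrite <- (sqrt_pow2 (A + B + C + D)) by lra. apply sqrt_le_1_alt.
  assert (Hsq : forall u, u ^ 2 = Rabs u * Rabs u) by (intro u; rewrite <- Rabs_mult, Rabs_pos_eq; nra).
  rewrite (Hsq (x - x')), (Hsq (y - y')), (Hsq (z - z')), (Hsq (w - w')). fold A B C D. nra.
Qed.

Lemma shear_bilipschitz (P : pt4 -> Prop) (S : R -> R -> R) C : 0 <= C ->
  (forall x y z w x' y' z' w', P (x, y, z, w) -> P (x', y', z', w') ->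
     Rabs (S x y - S x' y') <= C * Rmax (Rabs (x - x')) (Rabs (y - y'))) ->
  BiLipschitz_on P (shear S).
Proof.
  intros HC HS. exists (1 + C). split; [lra|].
  intros [[[x y] z] w] [[[x' y'] z'] w'] Hp Hq. cbn [shear].
  specialize (HS _ _ _ _ _ _ _ _ Hp Hq).
  pose proof (dist4_shift x y z w x' y' z' w' (S x y) (S x' y')).
  pose proof (dist4_unshift x y z w x' y' z' w' (S x y) (S x' y')).
  pose proof (Rmax_le_dist4 x y z w x' y' z' w').
  pose proof (Rmax_le_dist4 x y z (w + S x y) x' y' z' (w' + S x' y')).
  pose proof (Rle_trans _ _ _ (Rabs_pos _) (Rmax_l (Rabs (x - x')) (Rabs (y - y')))).
  split.
  - apply Rle_div_l; [lra|]. nra.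
  - nra.
Qed.

Lemma shear_holder (P : pt4 -> Prop) (S : R -> R -> R) rho C D :
  0 < rho <= 1 -> 0 <= C -> 1 <= D ->
  (forall p q, P p -> P q -> dist4 p q <= D) ->
  (forall x y z w x' y' z' w', P (x, y, z, w) -> P (x', y', z', w') ->
     Rabs (S x y - S x' y') <= C * rpow (Rmax (Rabs (x - x')) (Rabs (y - y'))) rho) ->
  Holder_on P (shear S) rho.
Proof.
  intros Hrho HC HD Hdiam HS. exists (D + C). split; [lra|].
  intros [[[x y] z] w] [[[x' y'] z'] w'] Hp Hq. cbn [shear].
  specialize (HS _ _ _ _ _ _ _ _ Hp Hq).
  pose proof (dist4_shift x y z w x' y' z' w' (S x y) (S x' y')).
  set (d := dist4 (x, y, z, w) (x', y', z', w')).
  assert (Hd : d <= D * rpow d rho).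
  { apply le_rpow; auto. split; [apply Rle_trans with (2 := Rmax_le_dist4 x y z w x' y' z' w');
      apply Rle_trans with (2 := Rmax_l _ _); apply Rabs_pos|apply Hdiam; auto]. }
  assert (Hm : rpow (Rmax (Rabs (x - x')) (Rabs (y - y'))) rho <= rpow d rho).
  { apply rpow_le_compat; [|lra]. split; [|apply Rmax_le_dist4].
    apply Rle_trans with (2 := Rmax_l _ _); apply Rabs_pos. }
  assert (C * rpow (Rmax (Rabs (x - x')) (Rabs (y - y'))) rho <= C * rpow d rho)
    by (apply Rmult_le_compat_l; auto).
  unfold d in *. lra.
Qed.

Lemma Rabs_diff_01 u v : 0 <= u <= 1 -> 0 <= v <= 1 -> Rabs (u - v) <= 1.
Proof. intros. apply Rabs_le; lra. Qed.

Lemma hsum_holder a b g rho : 0 < a < 1/2 -> 0 < b < 1/2 -> Cb1 g -> 0 < rho <= 1 ->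
  (forall K M, 0 <= K -> 0 <= M -> exists C, 0 <= C /\
     forall t, 0 <= t <= 1 -> modulus a b K M t <= C * rpow t rho) ->
  exists C, 0 <= C /\ forall x y x' y', 0 <= x < 1 -> Cantor a y -> 0 <= x' < 1 -> Cantor a y' ->
    Rabs (hsum a b g x y - hsum a b g x' y') <= C * rpow (Rmax (Rabs (x - x')) (Rabs (y - y'))) rho.
Proof.
  intros Ha Hb Hg Hrho Hmod.
  destruct (hsum_diff_le a b g Ha Hb Hg) as [K [M [HK [HM Hdiff]]]].
  destruct (Hmod K M HK HM) as [C [HC HT]].
  exists (2 * M + C). split; [lra|]. intros x y x' y' Hx Hy Hx' Hy'.
  pose proof (Hy O) as Hy0. pose proof (Hy' O) as Hy0'. simpl in Hy0, Hy0'.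
  set (m := Rmax (Rabs (x - x')) (Rabs (y - y'))).
  assert (Hxm : 0 <= Rabs (x - x') <= m) by (split; [apply Rabs_pos|apply Rmax_l]).
  assert (Hym : 0 <= Rabs (y - y') <= m) by (split; [apply Rabs_pos|apply Rmax_r]).
  assert (Hm1 : m <= 1) by (apply Rmax_lub; apply Rabs_diff_01; lra).
  assert (Hx1 : Rabs (x - x') <= rpow m rho).
  { eapply Rle_trans; [apply (le_rpow _ 1 rho); lra|]. rewrite Rmult_1_l.
    apply rpow_le_compat; lra. }
  assert (Hy1 : modulus a b K M (Rabs (y - y')) <= C * rpow m rho).
  { eapply Rle_trans; [apply HT; lra|]. apply Rmult_le_compat_l; auto.
    apply rpow_le_compat; lra. }
  eapply Rle_trans; [apply Hdiff; auto|].
  assert (2 * M * Rabs (x - x') <= 2 * M * rpow m rho) by (apply Rmult_le_compat_l; lra).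
  lra.
Qed.

Lemma Aset_diam a b p q : Aset a b p -> Aset a b q -> dist4 p q <= 4.
Proof.
  destruct p as [[[x y] z] w]; destruct q as [[[x' y'] z'] w'].
  intros (Hx & Hy & Hz & Hw) (Hx' & Hy' & Hz' & Hw').
  pose proof (Hy O). pose proof (Hy' O). pose proof (Hw O). pose proof (Hw' O). simpl in *.
  eapply Rle_trans; [apply dist4_le_sum|].
  pose proof (Rabs_diff_01 x x'). pose proof (Rabs_diff_01 y y').
  pose proof (Rabs_diff_01 z z'). pose proof (Rabs_diff_01 w w'). lra.
Qed.

Lemma Vset_diam b delta gn p q : Vset b delta gn p -> Vset b delta gn q ->
  dist4 p q <= 4 + 4 * delta + 2 * (gn / (1 - b)).
Proof.
  destruct p as [[[x y] z] w]; destruct q as [[[x' y'] z'] w'].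
  intros (Hx & Hy & Hz & Hw) (Hx' & Hy' & Hz' & Hw').
  eapply Rle_trans; [apply dist4_le_sum|].
  assert (Rabs (x - x') <= 1) by (apply Rabs_le; lra).
  assert (Rabs (y - y') <= 1 + 2 * delta) by (apply Rabs_le; lra).
  assert (Rabs (z - z') <= 1) by (apply Rabs_le; lra).
  assert (Rabs (w - w') <= 1 + 2 * delta + 2 * (gn / (1 - b))) by (apply Rabs_le; lra).
  lra.
Qed.

Section Regularity.
Variables (a b : R) (g : R -> R -> R) (rho : R).
Hypotheses (Ha : 0 < a < 1/2) (Hb : 0 < b < 1/2) (Hg : Cb1 g) (Hrho : 0 < rho <= 1)
  (Hmod : forall K M, 0 <= K -> 0 <= M -> exists C, 0 <= C /\
     forall t, 0 <= t <= 1 -> modulus a b K M t <= C * rpow t rho).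

Lemma hg_holder : Holder_on (Aset a b) (hg a b g) rho.
Proof.
  destruct (hsum_holder a b g rho Ha Hb Hg Hrho Hmod) as [C [HC HS]].
  change (hg a b g) with (shear (fun x y => hsum a b g x y)).
  apply (shear_holder _ _ rho C 4); auto; try lra.
  - apply Aset_diam.
  - intros x y z w x' y' z' w' (Hx & Hy & _) (Hx' & Hy' & _). apply HS; auto.
Qed.

Lemma hg_inv_holder delta gn : 0 < delta -> bounded_by g gn ->
  Holder_on (Ag a b g delta gn) (hg_inv a b g) rho.
Proof.
  intros Hd Hgn. pose proof (gn_div_nonneg b g gn Hb Hgn).
  destruct (hsum_holder a b g rho Ha Hb Hg Hrho Hmod) as [C [HC HS]].
  change (hg_inv a b g) with (shear (fun x y => - hsum a b g x y)).
  apply (shear_holder _ _ rho C (4 + 4 * delta + 2 * (gn / (1 - b)))); auto; try lra.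
  - intros p q Hp Hq. apply Vset_diam; apply (Ag_Vset a b g delta gn); auto.
  - intros x y z w x' y' z' w' Hp Hq.
    destruct (Ag_hg_inv_Aset a b g delta gn Ha Hb Hd Hgn _ Hp) as (Hx & Hy & _).
    destruct (Ag_hg_inv_Aset a b g delta gn Ha Hb Hd Hgn _ Hq) as (Hx' & Hy' & _).
    replace (- hsum a b g x y - - hsum a b g x' y') with (- (hsum a b g x y - hsum a b g x' y'))
      by ring.
    rewrite Rabs_Ropp. apply HS; auto.
Qed.

End Regularity.

Lemma lt_Rpower_of_lt_1 a rho : 0 < a < 1 -> 0 < rho < 1 -> a < Rpower a rho.
Proof.
  intros Ha Hrho. pose proof (ln_neg a Ha). unfold Rpower.
  rewrite <- (exp_ln a) at 1 by lra. apply exp_increasing. nra.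
Qed.

Section Cases.
Variables (a b : R) (g : R -> R -> R).
Hypotheses (Ha : 0 < a < 1/2) (Hb : 0 < b < 1/2) (Hg : Cb1 g).

Lemma hg_bilipschitz : b < a -> BiLipschitz_on (Aset a b) (hg a b g).
Proof.
  intros Hba. destruct (hsum_holder a b g 1 Ha Hb Hg ltac:(lra)) as [C [HC HS]].
  - intros K M HK HM.
    destruct (modulus_holder a b K M Ha Hb HK HM 1 ltac:(lra)) as [C [HC H]];
      [rewrite Rpower_1; lra|].
    exists C. split; auto. intros t Ht. apply H. lra.
  - change (hg a b g) with (shear (fun x y => hsum a b g x y)).
    apply (shear_bilipschitz _ _ C HC).
    intros x y z w x' y' z' w' (Hx & Hy & _) (Hx' & Hy' & _).
    rewrite <- (rpow_1 (Rmax _ _)); [apply HS; auto|].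
    apply Rle_trans with (2 := Rmax_l _ _). apply Rabs_pos.
Qed.

Lemma hg_holder_diagonal rho : a = b -> 0 < rho < 1 ->
  Holder_on (Aset a b) (hg a b g) rho /\
  (forall delta gn, 0 < delta -> bounded_by g gn ->
     Holder_on (Ag a b g delta gn) (hg_inv a b g) rho).
Proof.
  intros Hab Hrho.
  assert (Hmod : forall K M, 0 <= K -> 0 <= M -> exists C, 0 <= C /\
     forall t, 0 <= t <= 1 -> modulus a b K M t <= C * rpow t rho).
  { intros K M HK HM.
    destruct (modulus_holder a b K M Ha Hb HK HM rho ltac:(lra)) as [C [HC H]];
      [subst b; apply lt_Rpower_of_lt_1; lra|].
    exists C. split; auto. intros t Ht. apply H. lra. }
  split; [apply hg_holder|intros; apply hg_inv_holder]; auto; lra.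
Qed.

Lemma hg_holder_critical : a < b -> Holder_on (Aset a b) (hg a b g) (ln b / ln a).
Proof.
  intros Hab. pose proof (critical_exponent_bounds a b ltac:(lra) Hab ltac:(lra)).
  apply hg_holder; auto; [lra|]. intros K M HK HM. apply modulus_critical; auto.
Qed.

End Cases.

Theorem proposition3p3 (a b : R) (g : R -> R -> R)
  (ha : 0 < a < 1/2) (hb : 0 < b < 1/2) (hg1 : Cb1 g) :
  (forall p, Aset a b p -> let '(x, y, _, _) := p in ex_series (hterm a b g x y)) /\
  (forall p q, Aset a b p -> Aset a b q -> hg a b g p = hg a b g q -> p = q) /\
  (forall delta gnorm, 0 < delta -> bounded_by g gnorm ->
     (forall K, bounded_by g K -> gnorm <= K) ->
     (forall q, Ag a b g delta gnorm q <-> exists p, Aset a b p /\ hg a b g p = q) /\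
     (forall q, Ag a b g delta gnorm q ->
        Aset a b (hg_inv a b g q) /\ hg a b g (hg_inv a b g q) = q)) /\
  (forall p, Aset a b p -> hg_inv a b g (hg a b g p) = p) /\
  (forall v, Aset a b v -> B0 a b v = hg_inv a b g (Bg a b g (hg a b g v))) /\
  (b < a -> BiLipschitz_on (Aset a b) (hg a b g)) /\
  (a = b -> forall rho, 0 < rho < 1 ->
     Holder_on (Aset a b) (hg a b g) rho /\
     (forall delta gnorm, 0 < delta -> bounded_by g gnorm ->
        (forall K, bounded_by g K -> gnorm <= K) ->
        Holder_on (Ag a b g delta gnorm) (hg_inv a b g) rho)) /\
  (a < b -> Holder_on (Aset a b) (hg a b g) (ln b / ln a)).
Proof.
  pose proof hg1 as [[K HK] _].
  split; [intros [[[x y] z] w] [Hx _]; apply (ex_series_hterm a b g K); auto; lra|].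
  split; [intros p q _ _ E; rewrite <- (hg_inv_hg a b g p), E; apply hg_inv_hg|].
  split.
  { intros delta gn Hd Hgn _. split; [apply Ag_iff; auto|].
    intros q Hq. split; [apply Ag_hg_inv_Aset with delta gn|apply hg_hg_inv]; auto. }
  split; [intros p _; apply hg_inv_hg|].
  split; [intros v Hv; apply hg_inv_Bg_hg with K; auto|].
  split; [apply hg_bilipschitz; auto|].
  split; [|apply hg_holder_critical; auto].
  intros Hab rho Hrho. destruct (hg_holder_diagonal a b g ha hb hg1 rho Hab Hrho) as [H1 H2].
  split; auto.
Qed.
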